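(* There is an absolute constant $C>0$ such that the following holds. Let $(G,s,t)$ be an oriented parallel superedge on $n$ vertices with principal subgraphs $G_1,\dots,G_k$, each non-parallel. Partition $\{G_1,\dots,G_k\}$ into classes $E_1,\dots,E_\ell$ of mutually oriented-isomorphic subgraphs (two principal subgraphs lie in the same class iff they are oriented-isomorphic), and let $R_i\in E_i$ be a representative with $n_i$ vertices, $1\le i\le\ell$. Then $$\sum_{i=1}^{\ell} n_i\Big[\big|\mathsf{ST}(R_i)/\mathrm{Aut}_{\mathrm{or}}(R_i,s,t)\big|+\big|\mathsf{NT}(R_i)/\mathrm{Aut}_{\mathrm{or}}(R_i,s,t)\big|\Big]\le C\,n\,\big|\mathsf{ST}(G)/\mathrm{Aut}_{\mathrm{or}}(G,s,t)\big|.$$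
   Context: All graphs are finite, simple and undirected. An oriented series-parallel graph is a triple $(G,s,t)$ where $G$ is a graph and $s\neq t$ are vertices, defined recursively: (i) $G$ is a single edge with vertex set $\{s,t\}$; or (ii) (serial superedge) there are $k\ge 2$ oriented series-parallel graphs $(G_1,s_1,t_1),\dots,(G_k,s_k,t_k)$ with $s_1=s$, $t_k=t$, $t_i=s_{i+1}$ for $1\le i<k$, $V(G_i)\cap V(G_{i+1})=\{s_{i+1}\}$, $V(G_i)\cap V(G_j)=\emptyset$ for $|i-j|\ge2$, and $G=G_1\cup\dots\cup G_k$; or (iii) (parallel superedge) there are $k\ge2$ oriented series-parallel graphs $(G_1,s,t),\dots,(G_k,s,t)$ with $V(G_i)\cap V(G_j)=\{s,t\}$ for $i\neq j$ and $G=G_1\cup\dots\cup G_k$. The $G_i$ are the principal subgraphs; a graph is non-parallel if it is not a parallel superedge. $G_a,G_b$ are oriented-isomorphic if there is a graph isomorphism $\tau:G_a\to G_b$ with $\tau(s)=s$, $\tau(t)=t$. $\mathrm{Aut}_{\mathrm{or}}(H,u,v)$ is the group of automorphisms of $H$ fixing $u$ and $v$. $\mathsf{ST}(H)$ is the set of spanning trees of $H$. A near tree of an oriented series-parallel graph $(H,u,v)$ is a spanning forest of $H$ with exactly two connected components, one containing $u$ and the other containing $v$; $\mathsf{NT}(H)$ is the set of near trees. $X/\Gamma$ denotes the set of orbits of $X$ under the group $\Gamma$ (subgraphs $A,B$ in the same orbit iff $A=\sigma(B)$ for some $\sigma\in\Gamma$). *)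

(* Graphs live inside an ambient finite type V: a graph is a
   vertex set VS : {set V} and an edge set ES : {set {set V}} (each edge a
   2-element subset of VS). *)
From mathcomp Require Import all_boot all_order all_algebra all_fingroup.
From mathcomp Require Import boolp.

Set Implicit Arguments.
Unset Strict Implicit.
Unset Printing Implicit Defensive.

Section SP.
Variable V : finType.

Inductive sp : {set V} -> {set {set V}} -> V -> V -> Prop :=
| sp_edge (s t : V) :
    s != t -> sp [set s; t] [set [set s; t]] s t
| sp_series (k : nat) (Vs : nat -> {set V}) (Es : nat -> {set {set V}})
    (ss ts : nat -> V) (s t : V) :
    2 <= k ->
    (forall i, i < k -> sp (Vs i) (Es i) (ss i) (ts i)) ->
    ss 0 = s -> ts k.-1 = t ->
    (forall i, i.+1 < k -> ts i = ss i.+1) ->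
    (forall i, i.+1 < k -> Vs i :&: Vs i.+1 = [set ss i.+1]) ->
    (forall i j, i < k -> j < k -> i.+2 <= j -> Vs i :&: Vs j = set0) ->
    sp (\bigcup_(i < k) Vs i) (\bigcup_(i < k) Es i) s t
| sp_parallel (k : nat) (Vs : nat -> {set V}) (Es : nat -> {set {set V}})
    (s t : V) :
    2 <= k ->
    (forall i, i < k -> sp (Vs i) (Es i) s t) ->
    (forall i j, i < k -> j < k -> i != j -> Vs i :&: Vs j = [set s; t]) ->
    (forall i j, i < k -> j < k -> i != j -> Es i :&: Es j = set0) ->
    sp (\bigcup_(i < k) Vs i) (\bigcup_(i < k) Es i) s t.

Definition parallel_decomp (VS : {set V}) (ES : {set {set V}}) (s t : V)
    (k : nat) (Vs : nat -> {set V}) (Es : nat -> {set {set V}}) : Prop :=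
  [/\ 2 <= k /\ (forall i, i < k -> sp (Vs i) (Es i) s t),
      (forall i j, i < k -> j < k -> i != j -> Vs i :&: Vs j = [set s; t]),
      (forall i j, i < k -> j < k -> i != j -> Es i :&: Es j = set0),
      VS = \bigcup_(i < k) Vs i &
      ES = \bigcup_(i < k) Es i].

Definition is_parallel (VS : {set V}) (ES : {set {set V}}) (s t : V) : Prop :=
  exists k Vs Es, parallel_decomp VS ES s t k Vs Es.

Definition adj (T : {set {set V}}) : rel V := fun x y => [set x; y] \in T.

(* T contains a cycle (simple graph: at least 3 distinct vertices) *)
Definition has_cycle (T : {set {set V}}) : Prop :=
  exists p : seq V, [/\ uniq p, 3 <= size p & path.cycle (adj T) p].

Definition is_spanning_tree (VS : {set V}) (ES T : {set {set V}}) : Prop :=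
  [/\ T \subset ES,
      (forall x y, x \in VS -> y \in VS -> connect (adj T) x y) &
      ~ has_cycle T].

Definition is_near_tree (VS : {set V}) (ES T : {set {set V}}) (s t : V) : Prop :=
  [/\ T \subset ES, ~ has_cycle T,
      (forall x, x \in VS -> connect (adj T) x s \/ connect (adj T) x t) &
      ~ connect (adj T) s t].

Definition ST (VS : {set V}) (ES : {set {set V}}) : {set {set {set V}}} :=
  [set T | `[< is_spanning_tree VS ES T >]].

Definition NT (VS : {set V}) (ES : {set {set V}}) (s t : V)
  : {set {set {set V}}} :=
  [set T | `[< is_near_tree VS ES T s t >]].

(* Aut_or(H,s,t): permutations of V restricting to automorphisms of H fixing
   s and t (every automorphism of H extends by the identity outside VS). *)
Definition autor (VS : {set V}) (ES : {set {set V}}) (s t : V)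
  : {set {perm V}} :=
  [set g : {perm V} | [&& [set g x | x in VS] == VS, g s == s, g t == t &
     [forall e : {set V}, (e \in ES) == ([set g x | x in e] \in ES)]]].

Definition img (g : {perm V}) (B : {set {set V}}) : {set {set V}} :=
  [set [set g x | x in e] | e : {set V} in B].

Definition orbits (Gam : {set {perm V}}) (X : {set {set {set V}}})
  : {set {set {set {set V}}}} :=
  [set [set img g B | g in Gam] | B in X].

Definition norbits (Gam : {set {perm V}}) (X : {set {set {set V}}}) : nat :=
  #|orbits Gam X|.

Definition or_iso (Va : {set V}) (Ea : {set {set V}}) (Vb : {set V})
    (Eb : {set {set V}}) (s t : V) : Prop :=
  exists f : V -> V,
    [/\ {in Va &, injective f}, [set f x | x in Va] = Vb,
        [set [set f x | x in e] | e : {set V} in Ea] = Eb, f s = s & f t = t].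

End SP.

From Pilot Require Import Defs.
From mathcomp Require Import all_boot all_order all_algebra all_fingroup.
From mathcomp Require Import boolp zify.

(* Every automorphism of the parallel superedge G fixing s and t permutes its
   principal subgraphs G_1, ..., G_k: in a non-parallel series-parallel graph
   any two edges are chained by edges sharing a vertex other than s and t, and
   such chains cannot jump between principal subgraphs.  Fix near trees N_i of
   all the G_i.  For a representative G_r, a spanning tree T of G_r glues with
   the N_i (i <> r) to a spanning tree of G; a near tree N of G_r glues with a
   spanning tree of some other G_j0, with copies of N in the G_i isomorphic to
   G_r and with the remaining N_i to a spanning tree of G.  Both gluings are
   injective on orbits, so each bracket of the sum is at most 2 |ST(G)/Aut|.
   Finally the G_i pairwise share only s and t and at most one of them is the
   edge st, hence sum_i |V(G_i)| <= 3n + 2 <= 5n, and C = 10 works. *)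

Set Implicit Arguments.
Unset Strict Implicit.
Unset Printing Implicit Defensive.

(* [img g T] and the orbits of [Defs] are, up to conversion, this action of
   {perm V} on edge sets and its orbits. *)
Notation edge_action := ('P^*^*)%act.

Lemma connect_ind (T : finType) (e : rel T) x (P : T -> Prop) :
  P x -> (forall a b, P a -> e a b -> P b) -> forall y, connect e x y -> P y.
Proof.
move=> Px stepP y /connectP[p pth ->]; elim: p x Px pth => //= z p IH x Px /andP[exz pz].
exact: IH (stepP _ _ Px exz) pz.
Qed.

Section Graphs.
Variable V : finType.
Implicit Types (S T : {set {set V}}) (x y u w : V) (g : {perm V}).

Lemma adj_sym T : symmetric (adj T).
Proof. by move=> x y; rewrite /adj setUC. Qed.

Lemma connect_adjC T : connect_sym (adj T).
Proof. exact/sym_connect_sym/adj_sym. Qed.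

Lemma connect_adjS S T x y :
  S \subset T -> connect (adj S) x y -> connect (adj T) x y.
Proof.
by move=> sST; apply: connect_sub => a b ab; rewrite connect1 // /adj (subsetP sST).
Qed.

Lemma connect_set2 T s t x y : x \in [set s; t] -> y \in [set s; t] -> x != y ->
  connect (adj T) x y = connect (adj T) s t.
Proof.
by rewrite !inE => /orP[]/eqP-> /orP[]/eqP->; rewrite ?eqxx // connect_adjC.
Qed.

Lemma has_cycleS S T : S \subset T -> has_cycle S -> has_cycle T.
Proof.
move=> sST [[|a p] [up sz cyc]] //; exists (a :: p); split => //.
by apply: sub_path cyc => b c; rewrite /adj => /(subsetP sST).
Qed.

Lemma adj_act g T x y : adj T x y -> adj (edge_action T g) (g x) (g y).
Proof.
rewrite /adj => Txy.
have ->: [set g x; g y] = [set g z | z in [set x; y]] by rewrite imsetU1 imset_set1.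
exact: imset_f.
Qed.

Lemma connect_act g T x y :
  connect (adj T) x y -> connect (adj (edge_action T g)) (g x) (g y).
Proof.
elim/connect_ind: y / => // a b gxa ab.
exact: connect_trans gxa (connect1 (adj_act g ab)).
Qed.

Lemma connect_act_fixed g T x y : g x = x -> g y = y ->
  connect (adj (edge_action T g)) x y = connect (adj T) x y.
Proof.
move=> gx gy; apply/idP/idP => [|/(connect_act g)]; last by rewrite gx gy.
by move/(connect_act g^-1%g); rewrite actK -{1}gx -{1}gy !permK.
Qed.

Lemma has_cycle_act g T : has_cycle (edge_action T g) <-> has_cycle T.
Proof.
suff cyc_act h S : has_cycle S -> has_cycle (edge_action S h).
  by split=> [/(cyc_act g^-1%g)|/cyc_act //]; rewrite actK.
case=> [[|a p] [up sz cyc]] //; exists (map h (a :: p)); split.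
- by rewrite map_inj_uniq //; apply: perm_inj.
- by rewrite size_map.
move: cyc; rewrite /= -map_rcons; move: (rcons p a) => q.
elim: q a {up sz} => //= b q IH c /andP[cb bq].
by rewrite adj_act //=; apply: IH.
Qed.

End Graphs.

Section Forests.
Variable V : finType.
Implicit Types (T : {set {set V}}) (VS : {set V}) (x y u w : V).

Lemma mem_ST VS ES T : reflect (is_spanning_tree VS ES T) (T \in ST VS ES).
Proof. by rewrite inE; apply: asboolP. Qed.

Lemma mem_NT VS ES T s t : reflect (is_near_tree VS ES T s t) (T \in NT VS ES s t).
Proof. by rewrite inE; apply: asboolP. Qed.

Lemma adj_setD T e u w : [set u; w] != e -> adj T u w -> adj (T :\ e) u w.
Proof. by rewrite /adj !inE => -> ->. Qed.

Lemma path_setD_edge T x y b p :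
  x \notin b :: p -> path (adj T) b p -> path (adj (T :\ [set x; y])) b p.
Proof.
elim: p b => //= c p IH b xbcp /andP[bc cp].
have xcp : x \notin c :: p by apply: contra xbcp; rewrite !inE => ->; rewrite orbT.
rewrite IH // andbT; apply: adj_setD bc; apply: contraNneq xbcp => e.
have: x \in [set b; c] by rewrite e !inE eqxx.
by rewrite !inE => /orP[]->; rewrite ?orbT.
Qed.

Lemma cycle_edge T : has_cycle T ->
  exists x y, [/\ x != y, [set x; y] \in T & connect (adj (T :\ [set x; y])) x y].
Proof.
case=> [[|x [|b p]]] [up sz] //=; rewrite rcons_path => /andP[xb /andP[bp yx]].
have yp : last b p \in p by case: p {up bp yx} sz => // c q _; exact: (mem_last c q).
set y := last b p in yx yp.
have [xbp bp_u] : x \notin b :: p /\ b \notin p by case/and3P: up.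
exists x, y; split; first by apply: contraNneq xbp => ->; rewrite inE yp orbT.
  by move: yx; rewrite /adj setUC.
apply/connectP; exists (b :: p) => //=; rewrite path_setD_edge // andbT.
apply: adj_setD xb; apply/eqP => e; have: b \in [set x; y] by rewrite -e !inE eqxx orbT.
by rewrite !inE => /orP[]/eqP b_xy; [rewrite b_xy mem_head in xbp|rewrite b_xy yp in bp_u].
Qed.

Lemma forest_edge T x y : ~ has_cycle T -> [set x; y] \in T -> x != y ->
  ~~ connect (adj (T :\ [set x; y])) x y.
Proof.
move=> acycT xyT nxy; apply/negP => /connectP[p0 pth0 ylast].
move: ylast; case: (shortenP pth0) => p pth up _ ylast.
have subT : subrel (adj (T :\ [set x; y])) (adj T).
  by move=> a b; rewrite /adj inE => /andP[].
apply: acycT; exists (x :: p); split => //.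
  case: p pth up ylast => [_ _ yx|b [|c r] //= pth _ yb]; first by rewrite yx eqxx in nxy.
  by move: pth; rewrite -yb /adj !inE eqxx.
by rewrite /= rcons_path (sub_path subT pth) -ylast /adj setUC.
Qed.

Lemma connect_setD_cycle_edge T x y u w :
  connect (adj (T :\ [set x; y])) x y ->
  connect (adj T) u w -> connect (adj (T :\ [set x; y])) u w.
Proof.
move=> cxy; apply: connect_sub => a b ab.
have [e|ne] := eqVneq [set a; b] [set x; y]; last exact/connect1/adj_setD.
have: a \in [set x; y] by rewrite -e !inE eqxx.
have: b \in [set x; y] by rewrite -e !inE eqxx orbT.
by rewrite !inE => /orP[]/eqP-> /orP[]/eqP->; rewrite ?connect0 // connect_adjC.
Qed.

Lemma exists_spanning_tree VS ES :
  (forall x y, x \in VS -> y \in VS -> connect (adj ES) x y) ->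
  exists T, is_spanning_tree VS ES T.
Proof.
suff: forall T, T \subset ES ->
    (forall x y, x \in VS -> y \in VS -> connect (adj T) x y) ->
    exists T, is_spanning_tree VS ES T by apply.
move=> T; have [n] := ubnP #|T|; elim: n T => // n IH T /ltnSE leTn sTE conT.
have [cycT|acycT] := pselect (has_cycle T); last by exists T.
have [x [y [_ xyT cxy]]] := cycle_edge cycT.
apply: (IH (T :\ [set x; y])).
- by rewrite (cardsD1 [set x; y]) xyT in leTn.
- exact: subset_trans (subsetDl _ _) sTE.
- by move=> u w uV wV; apply: connect_setD_cycle_edge (conT u w uV wV).
Qed.

Lemma exists_near_tree VS ES T s t : is_spanning_tree VS ES T ->
  s \in VS -> t \in VS -> s != t -> exists N, is_near_tree VS ES N s t.
Proof.
case=> sTE conT acycT sV tV nst; have /connectP[p0 pth0] := conT s t sV tV.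
case: (shortenP pth0) => {p0 pth0} p pth up _.
case/lastP: p pth up => [_ _ ts|q z]; first by rewrite ts eqxx in nst.
rewrite last_rcons rcons_path -rcons_cons rcons_uniq => + /andP[tsq _] zt.
subst z; set y := last s q => /andP[pthq yt].
have nty : t != y by apply: contraNneq tsq => ->; apply: mem_last.
have tyT : [set t; y] \in T by rewrite setUC.
set N := T :\ [set t; y].
have syN : connect (adj N) s y by apply/connectP; exists q; rewrite ?path_setD_edge.
have ntyN := forest_edge acycT tyT nty.
exists N; split.
- exact: subset_trans (subsetDl _ _) sTE.
- by move/(has_cycleS (subsetDl _ _)).
- move=> v /(conT s v sV) sv; elim/connect_ind: v / sv => [|a b a_hub ab]; first by left.
  have [e|ne] := eqVneq [set a; b] [set t; y].
    have: b \in [set t; y] by rewrite -e !inE eqxx orbT.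
    by rewrite !inE => /orP[]/eqP->; [right|left; rewrite connect_adjC].
  have ba : connect (adj N) b a by rewrite connect_adjC connect1 ?adj_setD.
  by case: a_hub => [a_s|a_t]; [left|right]; apply: connect_trans ba _.
- move=> st; move/negP: ntyN; apply.
  by apply: connect_trans syN; rewrite connect_adjC.
Qed.

End Forests.

Lemma bigcup_setD1 (T I : finType) (P : pred I) (F : I -> {set T}) x :
  (\bigcup_(i | P i) F i) :\ x = \bigcup_(i | P i) (F i :\ x).
Proof. exact: (big_morph (fun A => A :\ x) (fun A B => setDUl A B [set x]) (set0D _)). Qed.

Lemma bigcup_ord_sup (T : finType) k (X : nat -> {set T}) i :
  i < k -> X i \subset \bigcup_(j < k) X j.
Proof. by move=> ik; apply: (bigcup_sup (Ordinal ik)). Qed.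

Section Gluing.
Variable V : finType.
Variables (k : nat) (Vs : nat -> {set V}) (s t : V).
Hypothesis meet_hubs :
  forall i j, i < k -> j < k -> i != j -> Vs i :&: Vs j \subset [set s; t].

Lemma shared_hub i j a :
  i < k -> j < k -> i != j -> a \in Vs i -> a \in Vs j -> a \in [set s; t].
Proof. by move=> ik jk ij ai aj; apply: (subsetP (meet_hubs ik jk ij)); rewrite inE ai. Qed.

Section Pieces.
Variable F : nat -> {set {set V}}.
Hypothesis F_in : forall i, i < k -> forall e, e \in F i -> e \subset Vs i.

Lemma adj_bigcup a b : adj (\bigcup_(i < k) F i) a b ->
  exists2 l, l < k & [/\ adj (F l) a b, a \in Vs l & b \in Vs l].
Proof.
case/bigcupP=> l _ abl; exists l => //; have /subsetP abV := F_in (ltn_ord l) abl.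
by split=> //; apply: abV; rewrite !inE eqxx ?orbT.
Qed.

Lemma connect_in_piece j u v :
  j < k -> u \in Vs j -> connect (adj (F j)) u v -> v \in Vs j.
Proof.
move=> jk uj; elim/connect_ind: v / => // a b _ /(F_in jk)/subsetP; apply.
by rewrite !inE eqxx orbT.
Qed.

Lemma connect_bigcup_hub j u v : j < k -> u \in Vs j ->
  connect (adj (\bigcup_(i < k) F i)) u v -> ~~ connect (adj (F j)) u v ->
  exists2 h, h \in [set s; t] & connect (adj (F j)) u h.
Proof.
move=> jk uj cuv nuv.
have [us|nus] := boolP (connect (adj (F j)) u s); first by exists s; rewrite ?inE ?eqxx.
have [ut|nut] := boolP (connect (adj (F j)) u t); first by exists t; rewrite ?inE ?eqxx ?orbT.
case/negP: nuv; elim/connect_ind: v / cuv => // a b ua /adj_bigcup[l lk [ab al _]].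
have [lj|lj] := eqVneq l j; first by subst l; apply: connect_trans ua (connect1 ab).
have := shared_hub lk jk lj al (connect_in_piece jk uj ua).
by rewrite !inE => /orP[]/eqP a_hub; rewrite -a_hub ua in nus nut.
Qed.

Lemma connect_bigcup_separated j a b :
  (forall i, i < k -> ~~ connect (adj (F i)) s t) ->
  j < k -> a \in Vs j -> b \in Vs j ->
  connect (adj (\bigcup_(i < k) F i)) a b -> connect (adj (F j)) a b.
Proof.
move=> sep jk aj bj cab; apply: contraT => nab.
have [h hst ah] := connect_bigcup_hub jk aj cab nab.
have same_hub i z : i < k -> z \in [set s; t] -> connect (adj (F i)) h z -> z = h.
  move=> ik zst hz; apply/eqP; apply: contraNT (sep i ik) => zh.
  by rewrite -(connect_set2 _ hst zst) // eq_sym.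
have hb : connect (adj (\bigcup_(i < k) F i)) h b.
  apply: connect_trans cab; rewrite connect_adjC.
  exact: connect_adjS (bigcup_ord_sup _ jk) ah.
have [i ik [bi hb_i]] : exists2 i, i < k & b \in Vs i /\ connect (adj (F i)) h b.
  elim/connect_ind: b / hb {bj cab nab} => [|a' b' [i ik [a'i ha']]].
    by exists j => //; rewrite (connect_in_piece jk aj ah).
  case/adj_bigcup=> l lk [ab' a'l b'l]; have [li|li] := eqVneq l i.
    by subst l; exists i => //; split=> //; apply: connect_trans ha' (connect1 ab').
  have a'h := same_hub i a' ik (shared_hub lk ik li a'l a'i) ha'.
  by exists l => //; split=> //; rewrite -a'h connect1.
have [ij|ij] := eqVneq i j; first by subst i; rewrite (connect_trans ah hb_i) in nab.
by move: nab; rewrite (same_hub i b ik (shared_hub ik jk ij bi bj) hb_i) ah.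
Qed.

End Pieces.

(* Remove an edge xy of a cycle, lying in piece j.  Inside piece j, x and y
   reach distinct hubs, so piece j links s and t and j = j0; afterwards no
   piece links s and t, and then the pieces cannot reconnect x and y. *)
Lemma bigcup_forest (F : nat -> {set {set V}}) j0 :
  (forall i, i < k -> forall e, e \in F i -> e \subset Vs i) ->
  (forall i, i < k -> ~ has_cycle (F i)) ->
  (forall i, i < k -> i != j0 -> ~~ connect (adj (F i)) s t) ->
  ~ has_cycle (\bigcup_(i < k) F i).
Proof.
move=> F_in acyc sep /cycle_edge[x [y [nxy /bigcupP[j _ xyj]]]].
have jk := ltn_ord j; rewrite bigcup_setD1 => cxy.
pose Fm i := F i :\ [set x; y].
have Fm_in i : i < k -> forall e, e \in Fm i -> e \subset Vs i.
  by move=> ik e /setD1P[_ /(F_in _ ik)].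
have Fm_sub i : Fm i \subset F i by apply: subsetDl.
have nxy_j : ~~ connect (adj (Fm j)) x y := forest_edge (acyc j jk) xyj nxy.
have /andP[xj yj] : (x \in Vs j) && (y \in Vs j).
  by rewrite !(subsetP (F_in j jk _ xyj)) // !inE eqxx ?orbT.
have [hx hxst xhx] := connect_bigcup_hub Fm_in jk xj cxy nxy_j.
have [hy hyst yhy] : exists2 hy, hy \in [set s; t] & connect (adj (Fm j)) y hy.
  by apply: (connect_bigcup_hub (v := x) Fm_in jk yj); rewrite connect_adjC.
have nhxy : hx != hy.
  by apply: contraNneq nxy_j => hxy; rewrite (connect_trans xhx) // hxy connect_adjC.
have hubs_j : connect (adj (F j)) s t.
  rewrite -(connect_set2 _ hxst hyst nhxy).
  apply: connect_trans (connect_trans (connect1 xyj) (connect_adjS (Fm_sub j) yhy)).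
  by rewrite connect_adjC (connect_adjS (Fm_sub j) xhx).
have jj0 : j = j0 :> nat by apply/eqP; apply: contraTT hubs_j; apply: sep.
suff /connect_bigcup_separated sepm : forall i, i < k -> ~~ connect (adj (Fm i)) s t.
  by move/negP: nxy_j; apply; apply: sepm.
move=> i ik; have [ij|ij] := eqVneq i j; last first.
  by apply: contra (connect_adjS (Fm_sub i)) (sep i ik _); rewrite -jj0.
subst i; rewrite -(connect_set2 _ hxst hyst nhxy); apply: contra nxy_j => hxy.
by rewrite (connect_trans xhx) // (connect_trans hxy) // connect_adjC.
Qed.

Lemma bigcup_spanning_tree (E X : nat -> {set {set V}}) j0 :
  (forall i, i < k -> forall e, e \in E i -> e \subset Vs i) ->
  j0 < k -> s \in Vs j0 -> t \in Vs j0 ->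
  is_spanning_tree (Vs j0) (E j0) (X j0) ->
  (forall i, i < k -> i != j0 -> is_near_tree (Vs i) (E i) (X i) s t) ->
  is_spanning_tree (\bigcup_(i < k) Vs i) (\bigcup_(i < k) E i) (\bigcup_(i < k) X i).
Proof.
move=> E_in j0k sj0 tj0 [XEj0 conj0 acycj0] near.
have XE i : i < k -> X i \subset E i.
  by move=> ik; have [->|ij0] := eqVneq i j0; [|case: (near i ik ij0)].
have X_sub i : i < k -> X i \subset \bigcup_(i < k) X i by apply: bigcup_ord_sup.
have to_s v : v \in \bigcup_(i < k) Vs i -> connect (adj (\bigcup_(i < k) X i)) v s.
  case/bigcupP=> i _ vi; have ik := ltn_ord i.
  have [ij0|ij0] := eqVneq (i : nat) j0.
    by rewrite ij0 in vi ik; apply: connect_adjS (X_sub _ ik) (conj0 _ _ vi sj0).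
  have [_ _ /(_ v vi) [vs|vt] _] := near i ik ij0; first exact: connect_adjS (X_sub _ ik) vs.
  apply: connect_trans (connect_adjS (X_sub _ ik) vt) _.
  exact: connect_adjS (X_sub _ j0k) (conj0 _ _ tj0 sj0).
split.
- by apply/bigcupsP => i _; apply: subset_trans (XE i (ltn_ord i)) (bigcup_sup i _).
- by move=> x y /to_s xs /to_s ys; rewrite (connect_trans xs) // connect_adjC.
apply: (@bigcup_forest X j0).
- by move=> i ik e /(subsetP (XE i ik)); apply: E_in.
- by move=> i ik; have [->|ij0] := eqVneq i j0; [|case: (near i ik ij0)].
- by move=> i ik ij0; case: (near i ik ij0) => _ _ _ /negP.
Qed.

End Gluing.

Section SeriesParallel.
Variable V : finType.
Implicit Types (ES : {set {set V}}) (VS : {set V}) (s t : V).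

Definition share_inner ES s t : rel {set V} := fun e f =>
  [&& e \in ES, f \in ES & [exists v, [&& v \in e, v \in f, v != s & v != t]]].

Lemma share_inner_sym ES s t : symmetric (share_inner ES s t).
Proof.
move=> e f; rewrite /share_inner andbCA; congr (_ && (_ && _)).
by apply/existsP/existsP => -[v]; rewrite andbCA; exists v.
Qed.

Lemma connect_share_innerC ES s t : connect_sym (share_inner ES s t).
Proof. exact/sym_connect_sym/share_inner_sym. Qed.

Lemma share_inner1 ES s t e f v : e \in ES -> f \in ES ->
  v \in e -> v \in f -> v != s -> v != t -> connect (share_inner ES s t) e f.
Proof.
move=> eE fE ve vf vs vt; apply: connect1; rewrite /share_inner eE fE.
by apply/existsP; exists v; rewrite ve vf vs vt.
Qed.

Lemma connect_share_innerS VS ES ES' a b s t :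
  ES \subset ES' -> (forall e, e \in ES -> e \subset VS) ->
  (forall v, v \in VS -> v != a -> v != b -> (v != s) && (v != t)) ->
  forall e f, connect (share_inner ES a b) e f -> connect (share_inner ES' s t) e f.
Proof.
move=> sES ES_in inner; apply: connect_sub => e f /and3P[eE fE /existsP[v /and4P[ve vf va vb]]].
have /andP[vs vt] := inner v (subsetP (ES_in e eE) v ve) va vb.
exact: share_inner1 (subsetP sES e eE) (subsetP sES f fE) ve vf vs vt.
Qed.

Record sp_props VS ES s t : Prop := SpProps {
  sp_neq : s != t;
  sp_s : s \in VS;
  sp_t : t \in VS;
  sp_edge2 : forall e, e \in ES -> exists x y, x != y /\ e = [set x; y];
  sp_edge_sub : forall e, e \in ES -> e \subset VS;
  sp_cover : forall v, v \in VS -> exists2 e, e \in ES & v \in e;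
  sp_connected : forall x y, x \in VS -> y \in VS -> connect (adj ES) x y;
  sp_to_s : forall e, e \in ES ->
    exists2 f, f \in ES & (s \in f) && connect (share_inner ES s t) e f;
  sp_to_t : forall e, e \in ES ->
    exists2 f, f \in ES & (t \in f) && connect (share_inner ES s t) e f }.

Lemma sp_props_edge s t : s != t -> sp_props [set s; t] [set [set s; t]] s t.
Proof.
move=> nst; split=> //.
- by rewrite !inE eqxx.
- by rewrite !inE eqxx orbT.
- by move=> e /set1P ->; exists s, t.
- by move=> e /set1P ->.
- by move=> v vV; exists [set s; t]; rewrite ?set11.
- move=> x y; rewrite !inE => /orP[]/eqP-> /orP[]/eqP->; rewrite ?connect0 //.
    by rewrite connect1 // /adj inE.
  by rewrite connect_adjC connect1 // /adj inE.
- by move=> e /set1P ->; exists [set s; t]; rewrite ?inE ?eqxx ?connect0.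
- by move=> e /set1P ->; exists [set s; t]; rewrite ?inE ?eqxx ?orbT ?connect0.
Qed.

End SeriesParallel.

Section Compositions.
Variable V : finType.
Variables (k : nat) (Vs : nat -> {set V}) (Es : nat -> {set {set V}}).
Variables (ss ts : nat -> V) (s t : V).
Hypothesis pieces : forall i, i < k -> sp_props (Vs i) (Es i) (ss i) (ts i).

Let VS := \bigcup_(i < k) Vs i.
Let ES := \bigcup_(i < k) Es i.

Lemma sp_props_bigcup : s != t -> s \in VS -> t \in VS ->
  (forall x, x \in VS -> connect (adj ES) x s) ->
  (forall e, e \in ES -> exists2 f, f \in ES & (s \in f) && connect (share_inner ES s t) e f) ->
  (forall e, e \in ES -> exists2 f, f \in ES & (t \in f) && connect (share_inner ES s t) e f) ->
  sp_props VS ES s t.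
Proof.
move=> nst sV tV to_s to_sE to_tE; split=> //.
- by move=> e /bigcupP[i _ ei]; apply: sp_edge2 (pieces (ltn_ord i)) _ ei.
- move=> e /bigcupP[i _ ei]; apply: subset_trans (bigcup_ord_sup _ (ltn_ord i)).
  exact: sp_edge_sub (pieces (ltn_ord i)) _ ei.
- move=> v /bigcupP[i _ vi]; have [e ei ve] := sp_cover (pieces (ltn_ord i)) vi.
  by exists e => //; apply: (subsetP (bigcup_ord_sup _ (ltn_ord i))).
- by move=> x y /to_s xs /to_s ys; rewrite (connect_trans xs) // connect_adjC.
Qed.

Lemma connect_piece i x y : i < k -> x \in Vs i -> y \in Vs i -> connect (adj ES) x y.
Proof.
move=> ik xi yi; apply: connect_adjS (bigcup_ord_sup _ ik) _.
exact: sp_connected (pieces ik) _ _ xi yi.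
Qed.

End Compositions.

Lemma sp_props_parallel (V : finType) k (Vs : nat -> {set V}) (Es : nat -> {set {set V}}) s t :
  0 < k -> (forall i, i < k -> sp_props (Vs i) (Es i) s t) ->
  sp_props (\bigcup_(i < k) Vs i) (\bigcup_(i < k) Es i) s t.
Proof.
move=> k0 pieces; have P0 := pieces 0 k0.
have toE i (h : V) e : i < k -> e \in Es i ->
    (exists2 f, f \in Es i & (h \in f) && connect (share_inner (Es i) s t) e f) ->
    exists2 f, f \in \bigcup_(i < k) Es i &
      (h \in f) && connect (share_inner (\bigcup_(i < k) Es i) s t) e f.
  move=> ik ei [f fi /andP[hf ef]]; exists f; first exact: (subsetP (bigcup_ord_sup _ ik)).
  rewrite hf; apply: (connect_share_innerS (bigcup_ord_sup _ ik) (sp_edge_sub (pieces _ ik))) ef.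
  by move=> v _ -> ->.
apply: (sp_props_bigcup (ss := fun=> s) (ts := fun=> t) pieces).
- exact: sp_neq P0.
- exact: (subsetP (bigcup_ord_sup _ k0)) _ (sp_s P0).
- exact: (subsetP (bigcup_ord_sup _ k0)) _ (sp_t P0).
- move=> x /bigcupP[i _ xi].
  exact: (connect_piece pieces (ltn_ord i) xi (sp_s (pieces _ (ltn_ord i)))).
- by move=> e /bigcupP[i _ ei]; apply: toE ei (sp_to_s (pieces _ (ltn_ord i)) ei).
- by move=> e /bigcupP[i _ ei]; apply: toE ei (sp_to_t (pieces _ (ltn_ord i)) ei).
Qed.

Section Series.
Variable V : finType.
Variables (k : nat) (Vs : nat -> {set V}) (Es : nat -> {set {set V}}).
Variables (ss ts : nat -> V) (s t : V).
Hypothesis k2 : 1 < k.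
Hypothesis pieces : forall i, i < k -> sp_props (Vs i) (Es i) (ss i) (ts i).
Hypothesis first_s : ss 0 = s.
Hypothesis last_t : ts k.-1 = t.
Hypothesis junction : forall i, i.+1 < k -> ts i = ss i.+1.
Hypothesis meet_next : forall i, i.+1 < k -> Vs i :&: Vs i.+1 = [set ss i.+1].
Hypothesis meet_far : forall i j, i < k -> j < k -> i.+2 <= j -> Vs i :&: Vs j = set0.

Let ES := \bigcup_(i < k) Es i.

Let inES i e : i < k -> e \in Es i -> e \in ES.
Proof. by move=> ik; apply/subsetP/bigcup_ord_sup. Qed.

Lemma series_meet i j v : i < j -> j < k -> v \in Vs i -> v \in Vs j ->
  j = i.+1 /\ v = ss j.
Proof.
move=> ij jk vi vj; have ik : i < k by lia.
case: (leqP i.+2 j) => [far|near].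
  by have /setP/(_ v) := meet_far ik jk far; rewrite !inE vi vj.
have ji : j = i.+1 by lia.
by subst j; split=> //; have /setP/(_ v) := meet_next jk; rewrite !inE vi vj => /esym/eqP.
Qed.

Lemma series_s_piece i : i < k -> s \in Vs i -> i = 0.
Proof.
move=> ik si; case: (posnP i) => // i_gt0.
have s0 : s \in Vs 0 by rewrite -first_s; apply: sp_s (pieces (ltnW k2)).
have [i1 s_ss] := series_meet i_gt0 ik s0 si; subst i.
by have := sp_neq (pieces (ltnW k2)); rewrite first_s junction // s_ss eqxx.
Qed.

Lemma series_t_piece i : i < k -> t \in Vs i -> i = k.-1.
Proof.
move=> ik ti; case: (eqVneq i k.-1) => // ne.
have k1k : k.-1 < k by lia.
have tk : t \in Vs k.-1 by rewrite -last_t; apply: sp_t (pieces k1k).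
have ilt : i < k.-1 by lia.
have [_ t_ss] := series_meet ilt k1k ti tk.
by have := sp_neq (pieces k1k); rewrite last_t t_ss eqxx.
Qed.

Lemma junction_inner i : 0 < i -> i < k -> (ss i != s) && (ss i != t).
Proof.
move=> i_gt0 ik; apply/andP; split; apply/eqP => e.
  by have := series_s_piece ik; rewrite -e (sp_s (pieces ik)) => /(_ isT) i0; rewrite i0 in i_gt0.
have i1k : i.-1 < k by lia.
have : t \in Vs i.-1 by rewrite -e -(prednK i_gt0) -junction ?prednK //; apply: sp_t (pieces i1k).
by move/(series_t_piece i1k); lia.
Qed.

Lemma piece_inner i v : i < k -> v \in Vs i -> v != ss i -> v != ts i ->
  (v != s) && (v != t).
Proof.
move=> ik vi vs vt; apply/andP; split; apply/eqP => e; subst v.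
  by have i0 := series_s_piece ik vi; subst i; rewrite first_s eqxx in vs.
by have ik1 := series_t_piece ik vi; subst i; rewrite last_t eqxx in vt.
Qed.

Lemma connect_share_inner_piece i e f : i < k ->
  connect (share_inner (Es i) (ss i) (ts i)) e f -> connect (share_inner ES s t) e f.
Proof.
move=> ik; apply: (connect_share_innerS (bigcup_ord_sup _ ik) (sp_edge_sub (pieces ik))).
by move=> v; apply: piece_inner.
Qed.

Lemma series_linked_to_first : exists f0,
  forall i, i < k -> forall e, e \in Es i -> connect (share_inner ES s t) e f0.
Proof.
have k0 : 0 < k by lia.
have [f0 f0E t0f0] := sp_cover (pieces k0) (sp_t (pieces k0)).
exists f0; elim=> [|i IH] ik e ei.
  have [f fE /andP[tf ef]] := sp_to_t (pieces k0) ei.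
  apply: connect_trans (connect_share_inner_piece k0 ef) _.
  have /andP[ts0s ts0t] : (ts 0 != s) && (ts 0 != t) by rewrite junction ?junction_inner.
  exact: share_inner1 (inES k0 fE) (inES k0 f0E) tf t0f0 ts0s ts0t.
have ik' : i < k by lia.
have [f fE /andP[sf ef]] := sp_to_s (pieces ik) ei.
apply: connect_trans (connect_share_inner_piece ik ef) _.
have [g gE tg] := sp_cover (pieces ik') (sp_t (pieces ik')).
apply: connect_trans (IH ik' g gE).
have /andP[ssi_s ssi_t] := junction_inner (ltn0Sn i) ik.
by apply: share_inner1 (inES ik fE) (inES ik' gE) sf _ ssi_s ssi_t; rewrite -junction.
Qed.

Lemma series_linked e f : e \in ES -> f \in ES -> connect (share_inner ES s t) e f.
Proof.
have [f0 to_f0] := series_linked_to_first.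
move=> /bigcupP[i _ ei] /bigcupP[j _ fj].
rewrite (connect_trans (to_f0 _ (ltn_ord i) _ ei)) // connect_share_innerC.
exact: to_f0 (ltn_ord j) _ fj.
Qed.

Lemma sp_props_series : sp_props (\bigcup_(i < k) Vs i) ES s t.
Proof.
have k0 : 0 < k by lia.
have k1k : k.-1 < k by lia.
have [P0 Pk] := (pieces k0, pieces k1k).
apply: (sp_props_bigcup pieces).
- apply/negP => /eqP st; have := series_t_piece k0.
  by rewrite -st -first_s (sp_s P0) => /(_ isT); lia.
- by rewrite -first_s; apply: (subsetP (bigcup_ord_sup _ k0)); apply: sp_s P0.
- by rewrite -last_t; apply: (subsetP (bigcup_ord_sup _ k1k)); apply: sp_t Pk.
- have ss_s i : i < k -> connect (adj ES) (ss i) s.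
    elim: i => [|i IH] ik; first by rewrite first_s connect0.
    apply: connect_trans _ (IH (ltnW ik)); rewrite -junction // connect_adjC.
    have Pi := pieces (ltnW ik); exact: (connect_piece pieces (ltnW ik) (sp_s Pi) (sp_t Pi)).
  move=> x /bigcupP[i _ xi]; apply: connect_trans (ss_s i (ltn_ord i)).
  exact: (connect_piece pieces (ltn_ord i) xi (sp_s (pieces (ltn_ord i)))).
- move=> e eE; have [f fE sf] := sp_cover P0 (sp_s P0); have fES := inES k0 fE.
  by rewrite first_s in sf; exists f; rewrite // sf series_linked.
- move=> e eE; have [f fE tf] := sp_cover Pk (sp_t Pk); have fES := inES k1k fE.
  by rewrite last_t in tf; exists f; rewrite // tf series_linked.
Qed.

End Series.

Lemma sp_props_of_sp (V : finType) (VS : {set V}) ES s t : sp VS ES s t -> sp_props VS ES s t.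
Proof.
elim=> {VS ES s t} [s t|k Vs Es ss ts s t k2 _ IH|k Vs Es s t k2 _ IH _ _].
- exact: sp_props_edge.
- exact: sp_props_series.
- exact: sp_props_parallel (ltnW k2) IH.
Qed.

Lemma nonparallel_linked (V : finType) (VS : {set V}) ES s t :
  sp VS ES s t -> ~ is_parallel VS ES s t ->
  forall e f, e \in ES -> f \in ES -> connect (share_inner ES s t) e f.
Proof.
case=> {VS ES s t} [s t _ _ e f /set1P -> /set1P ->|k Vs Es ss ts s t k2 spi fs lt jn mn mf _|].
- exact: connect0.
- move=> e f eE fE; apply: (series_linked k2 _ fs lt jn mn mf eE fE).
  by move=> i /spi/sp_props_of_sp.
by move=> k Vs Es s t k2 spi meetV meetE []; exists k, Vs, Es.
Qed.

Section Automorphisms.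
Variable V : finType.
Implicit Types (VS : {set V}) (ES : {set {set V}}) (s t : V) (g h : {perm V}).

Lemma mem_edge_action ES g e : ('P^* e g \in edge_action ES g) = (e \in ES).
Proof. exact/mem_imset/act_inj. Qed.

Lemma autorP VS ES s t g : reflect
  [/\ 'P^* VS g = VS, g s = s, g t = t & edge_action ES g = ES]%act
  (g \in autor VS ES s t).
Proof.
rewrite in_set; apply: (iffP and4P) => [[/eqP gV /eqP gs /eqP gt /forallP gE]|[gV gs gt gE]].
  split=> //; apply/eqP; rewrite eqEcard card_setact leqnn andbT.
  by apply/subsetP => _ /imsetP[e eE ->]; rewrite -(eqP (gE e)).
by split; try exact/eqP; apply/forallP => e; rewrite -{2}gE mem_edge_action.
Qed.

Lemma autor_group_set VS ES s t : group_set (autor VS ES s t).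
Proof.
apply/group_setP; split=> [|g h /autorP[gV gs gt gE] /autorP[hV hs ht hE]]; apply/autorP.
  by split; rewrite ?act1 ?perm1.
by split; rewrite ?actM ?gV ?hV ?gE ?hE // permM ?gs ?gt ?hs ?ht.
Qed.

Canonical autor_group VS ES s t := group (autor_group_set VS ES s t).

End Automorphisms.

Section PrincipalSubgraphs.
Variable V : finType.
Variables (k : nat) (Vs : nat -> {set V}) (Es : nat -> {set {set V}}) (s t : V).
Hypothesis pieces_sp : forall i, i < k -> sp (Vs i) (Es i) s t.
Hypothesis pieces_np : forall i, i < k -> ~ is_parallel (Vs i) (Es i) s t.
Hypothesis meetV : forall i j, i < k -> j < k -> i != j -> Vs i :&: Vs j = [set s; t].
Hypothesis meetE : forall i j, i < k -> j < k -> i != j -> Es i :&: Es j = set0.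

Let VS := \bigcup_(i < k) Vs i.
Let ES := \bigcup_(i < k) Es i.

Lemma piece_props i : i < k -> sp_props (Vs i) (Es i) s t.
Proof. by move/pieces_sp/sp_props_of_sp. Qed.

Lemma piece_edge i : i < k -> exists f, f \in Es i.
Proof.
by move/piece_props => P; have [f fE _] := sp_cover P (sp_s P); exists f.
Qed.

(* Edges of piece r are chained through inner vertices; since g fixes s and t,
   the images of two consecutive edges share a vertex outside [set s; t],
   hence lie in the same piece. *)
Lemma autor_piece_edges g r : g \in autor VS ES s t -> r < k ->
  exists2 j, j < k & forall e, e \in Es r -> ('P^* e g)%act \in Es j.
Proof.
move=> /autorP[_ gs gt gE] rk; have [f0 f0r] := piece_edge rk.
have gES e : e \in Es r -> ('P^* e g)%act \in ES.
  by move=> er; rewrite -gE mem_edge_action; apply: (subsetP (bigcup_ord_sup _ rk)).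
have /bigcupP[j _ gf0] := gES f0 f0r; exists j => // e er.
have {er} := nonparallel_linked (pieces_sp rk) (pieces_np rk) f0r er.
elim/connect_ind: e / => // a b ga /and3P[ar br /existsP[v /and4P[va vb vs vt]]].
have /bigcupP[l _ gb] := gES b br; have [lj|lj] := eqVneq (l : nat) j; first by rewrite -lj.
have gv_in (i : 'I_k) c : ('P^* c g)%act \in Es i -> v \in c -> g v \in Vs i.
  by move=> gc vc; apply: (subsetP (sp_edge_sub (piece_props (ltn_ord i)) gc)); apply: imset_f.
have /setP/(_ (g v)) := meetV (ltn_ord l) (ltn_ord j) lj.
rewrite !inE (gv_in _ _ ga va) (gv_in _ _ gb vb) -{1}gs -{1}gt !(inj_eq perm_inj).
by rewrite (negPf vs) (negPf vt).
Qed.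

Lemma autor_piece g r : g \in autor VS ES s t -> r < k ->
  exists2 j, j < k & edge_action (Es r) g = Es j /\ ('P^* (Vs r) g)%act = Vs j.
Proof.
move=> gA rk; have [j jk gEr] := autor_piece_edges gA rk.
have [r' r'k gEj] := autor_piece_edges (groupVr gA) jk.
have [f0 f0r] := piece_edge rk.
have f0r' : f0 \in Es r' by have := gEj _ (gEr _ f0r); rewrite actK.
have [r'r|r'r] := eqVneq r' r; last first.
  by have /setP/(_ f0) := meetE r'k rk r'r; rewrite !inE f0r f0r'.
subst r'.
have EjE : edge_action (Es r) g = Es j.
  apply/setP => f; apply/imsetP/idP => [[e er ->]|fj]; first exact: gEr.
  by exists ('P^* f g^-1%g)%act; rewrite ?actKV ?gEj.
exists j => //; split=> //.
have [Pr Pj] := (piece_props rk, piece_props jk).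
apply/setP => y; apply/imsetP/idP => [[x xr ->]|yj].
  have [e er xe] := sp_cover Pr xr.
  by apply: (subsetP (sp_edge_sub Pj (gEr e er))); apply: imset_f.
have [f fj yf] := sp_cover Pj yj.
move: fj; rewrite -EjE => /imsetP[e er fe]; subst f.
have [x xe ->] := imsetP yf; exists x => //.
exact: (subsetP (sp_edge_sub Pr er)).
Qed.

End PrincipalSubgraphs.

Lemma card_imset_le_fibers (A B C : finType) (D : {set A}) (f1 : A -> B) (f2 : A -> C) :
  {in D &, forall x y, f2 x = f2 y -> f1 x = f1 y} -> #|f1 @: D| <= #|f2 @: D|.
Proof.
move=> fib; have [->|[x0 x0D]] := set_0Vmem D; first by rewrite !imset0 cards0.
pose lift c := if [pick x in D | f2 x == c] is Some x then f1 x else f1 x0.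
suff ->: f1 @: D = lift @: (f2 @: D) by apply: leq_imset_card.
rewrite -imset_comp; apply: eq_in_imset => x xD /=; rewrite /lift.
case: pickP => [y /andP[yD /eqP f2yx]|/(_ x)]; last by rewrite xD eqxx.
exact: fib xD yD (esym f2yx).
Qed.

Section Orbits.
Variable V : finType.
Implicit Types (G H : {group {perm V}}) (X Y : {set {set {set V}}}).

Lemma norbits_le G H X Y (psi : {set {set V}} -> {set {set V}}) :
  {in X, forall B, psi B \in Y} ->
  {in X &, forall B1 B2,
    psi B2 \in orbit edge_action H (psi B1) -> B2 \in orbit edge_action G B1} ->
  norbits G X <= norbits H Y.
Proof.
move=> psiY psi_orb; rewrite /norbits -[orbits G X]/(orbit edge_action G @: X).
rewrite -[orbits H Y]/(orbit edge_action H @: Y).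
apply: (@leq_trans #|(orbit edge_action H \o psi) @: X|).
  apply: card_imset_le_fibers => B1 B2 B1X B2X /= orbH.
  apply/esym/orbit_eqP/psi_orb => //; rewrite orbH; exact: orbit_refl.
rewrite imset_comp; apply/subset_leq_card/imsetS/subsetP => _ /imsetP[B BX ->].
exact: psiY.
Qed.

End Orbits.

Section Isomorphisms.
Variable V : finType.

Lemma perm_extend (A : {set V}) (f : V -> V) :
  {in A &, injective f} -> exists p : {perm V}, {in A, p =1 f}.
Proof.
move=> finj; set B := f @: A.
have cardC : #|~: A| = #|~: B|.
  by apply/eqP; rewrite -(eqn_add2l #|A|) cardsC -{1}(card_in_imset finj) cardsC.
pose eA := enum (~: A); pose eB := enum (~: B).
pose h x := if x \in A then f x else nth x eB (index x eA).
have hA x : x \in A -> h x \in B by move=> xA; rewrite /h xA imset_f.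
have ieB x : x \notin A -> index x eA < size eB.
  by move=> xA; rewrite -cardE -cardC cardE index_mem mem_enum inE.
have hC x : x \notin A -> h x \notin B.
  by move=> xA; rewrite /h (negPf xA) -in_setC -mem_enum mem_nth ?ieB.
have hinj : injective h.
  move=> x y; case: (boolP (x \in A)) => xA; case: (boolP (y \in A)) => yA.
  - by rewrite /h xA yA; apply: finj.
  - by move=> hxy; have := hC y yA; rewrite -hxy hA.
  - by move=> hxy; have := hC x xA; rewrite hxy hA.
  rewrite /h (negPf xA) (negPf yA) (set_nth_default y) ?ieB // => /eqP.
  rewrite nth_uniq ?enum_uniq ?ieB // => /eqP /(congr1 (nth x eA)).
  by rewrite !nth_index // mem_enum inE.
by exists (perm hinj) => x xA; rewrite permE /h xA.
Qed.

Lemma or_iso_perm (Va Vb : {set V}) (Ea Eb : {set {set V}}) s t :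
  or_iso Va Ea Vb Eb s t -> (forall e, e \in Ea -> e \subset Va) ->
  s \in Va -> t \in Va ->
  exists p : {perm V}, [/\ 'P^* Va p = Vb, edge_action Ea p = Eb, p s = s & p t = t]%act.
Proof.
case=> f [finj fV fE fs ft] Ea_in sV tV; have [p pf] := perm_extend finj.
exists p; split; rewrite ?pf //; first by rewrite -fV; apply: eq_in_imset.
rewrite -fE; apply: eq_in_imset => e eE; apply: eq_in_imset => x xe.
exact/pf/(subsetP (Ea_in e eE)).
Qed.

Lemma near_tree_act (Va Vb : {set V}) (Ea Eb N : {set {set V}}) s t (p : {perm V}) :
  ('P^* Va p = Vb)%act -> edge_action Ea p = Eb -> p s = s -> p t = t ->
  is_near_tree Va Ea N s t -> is_near_tree Vb Eb (edge_action N p) s t.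
Proof.
move=> pV pE ps pt [sub acyc cov nst]; split.
- by rewrite -pE; apply: imsetS.
- by move/has_cycle_act.
- move=> y; rewrite -pV => /imsetP[x xV ->].
  by case: (cov x xV) => h; [left; rewrite -ps|right; rewrite -pt]; apply: connect_act.
- by rewrite connect_act_fixed.
Qed.

End Isomorphisms.

Section Injections.
Variable V : finType.
Variables (k : nat) (Vs : nat -> {set V}) (Es : nat -> {set {set V}}) (s t : V).
Hypothesis pieces_sp : forall i, i < k -> sp (Vs i) (Es i) s t.
Hypothesis pieces_np : forall i, i < k -> ~ is_parallel (Vs i) (Es i) s t.
Hypothesis meetV : forall i j, i < k -> j < k -> i != j -> Vs i :&: Vs j = [set s; t].
Hypothesis meetE : forall i j, i < k -> j < k -> i != j -> Es i :&: Es j = set0.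

Let VS := \bigcup_(i < k) Vs i.
Let ES := \bigcup_(i < k) Es i.
Let A := autor_group VS ES s t.

Let meet_hubs i j : i < k -> j < k -> i != j -> Vs i :&: Vs j \subset [set s; t].
Proof. by move=> ik jk ij; rewrite meetV. Qed.

Let Es_in i : i < k -> forall e, e \in Es i -> e \subset Vs i.
Proof. by move/(piece_props pieces_sp)/sp_edge_sub. Qed.

Let hubs_in i : i < k -> s \in Vs i /\ t \in Vs i.
Proof. by move/(piece_props pieces_sp) => P; split; [apply: sp_s P|apply: sp_t P]. Qed.

Lemma bigcupI_piece (X : nat -> {set {set V}}) j : j < k ->
  (forall i, i < k -> X i \subset Es i) -> (\bigcup_(i < k) X i) :&: Es j = X j.
Proof.
move=> jk XE; apply/setP => f; rewrite inE; apply/andP/idP => [[/bigcupP[i _ fi] fj]|fj].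
  have [<- //|ij] := eqVneq (i : nat) j.
  by have /setP/(_ f) := meetE (ltn_ord i) jk ij; rewrite !inE fj (subsetP (XE _ (ltn_ord i))).
by split; [apply: (subsetP (bigcup_ord_sup _ jk))|apply: (subsetP (XE _ jk))].
Qed.

Lemma edge_action_piece g r j (X Y : nat -> {set {set V}}) : r < k -> j < k ->
  edge_action (Es r) g = Es j ->
  (forall i, i < k -> X i \subset Es i) -> (forall i, i < k -> Y i \subset Es i) ->
  edge_action (\bigcup_(i < k) X i) g = \bigcup_(i < k) Y i -> edge_action (X r) g = Y j.
Proof.
move=> rk jk gEr XE YE gXY.
rewrite -(bigcupI_piece rk XE) -(bigcupI_piece jk YE) -gXY -gEr.
by apply: imsetI => e f _ _; apply: act_inj.
Qed.

Lemma autor_restrict g r : g \in A ->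
  edge_action (Es r) g = Es r -> ('P^* (Vs r) g)%act = Vs r -> g \in autor (Vs r) (Es r) s t.
Proof. by move=> /autorP[_ gs gt _] gE gV; apply/autorP. Qed.

Variable Nt : nat -> {set {set V}}.
Hypothesis Nt_near : forall i, i < k -> is_near_tree (Vs i) (Es i) (Nt i) s t.
Variable r : nat.
Hypothesis rk : r < k.
Let Ar := autor_group (Vs r) (Es r) s t.

Definition glue_tree (T : {set {set V}}) i := if i == r then T else Nt i.

Lemma norbits_ST_le :
  norbits (autor (Vs r) (Es r) s t) (ST (Vs r) (Es r)) <= norbits (autor VS ES s t) (ST VS ES).
Proof.
have glueE (T : {set {set V}}) :
    T \subset Es r -> forall i, i < k -> glue_tree T i \subset Es i.
  by move=> TE i ik; rewrite /glue_tree; case: eqP => [->//|_]; case: (Nt_near ik).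
apply: (@norbits_le _ Ar A _ _ (fun T => \bigcup_(i < k) glue_tree T i)).
  move=> T /mem_ST stT; apply/mem_ST.
  have [sr tr] := hubs_in rk.
  apply: (bigcup_spanning_tree meet_hubs Es_in rk sr tr); first by rewrite /glue_tree eqxx.
  by move=> i ik ir; rewrite /glue_tree (negPf ir); apply: Nt_near.
move=> T1 T2 /mem_ST stT1 /mem_ST stT2 /orbitP[g gA gT].
have [T1E conT1 _] := stT1; have [T2E _ _] := stT2.
have [j jk [gEr gVr]] := autor_piece pieces_sp pieces_np meetV meetE gA rk.
have := edge_action_piece rk jk gEr (glueE _ T1E) (glueE _ T2E) gT.
rewrite /glue_tree eqxx; case: eqP => [jr gT1|jr gT1].
  by rewrite jr in gEr gVr; apply/orbitP; exists g => //; apply: autor_restrict.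
have [_ gs gt _] := autorP _ _ _ _ _ gA.
have [sr tr] := hubs_in rk; have [_ _ _ /negP[]] := Nt_near jk.
by rewrite -gT1 connect_act_fixed // conT1.
Qed.

Section NearTrees.
Variable j0 : nat.
Hypotheses (j0k : j0 < k) (j0r : j0 != r).
Variable T0 : {set {set V}}.
Hypothesis T0_tree : is_spanning_tree (Vs j0) (Es j0) T0.
Variable P : nat -> {perm V}.
Hypothesis P_iso : forall j, j < k -> or_iso (Vs r) (Es r) (Vs j) (Es j) s t ->
  [/\ 'P^* (Vs r) (P j) = Vs j, edge_action (Es r) (P j) = Es j, P j s = s & P j t = t]%act.

(* The copies of N in the pieces isomorphic to piece r make the gluing
   injective on orbits when an automorphism moves piece r onto such a piece. *)
Definition glue_near (N : {set {set V}}) i :=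
  if i == r then N else if i == j0 then T0
  else if `[< or_iso (Vs r) (Es r) (Vs i) (Es i) s t >] then edge_action N (P i) else Nt i.

Lemma glue_near_sub (N : {set {set V}}) :
  N \subset Es r -> forall i, i < k -> glue_near N i \subset Es i.
Proof.
move=> NE i ik; rewrite /glue_near; case: eqP => [->//|_].
case: eqP => [->|_]; first by case: T0_tree.
case: asboolP => [iso|_]; last by case: (Nt_near ik).
by have [_ <- _ _] := P_iso ik iso; apply: imsetS.
Qed.

Lemma glue_near_tree (N : {set {set V}}) : is_near_tree (Vs r) (Es r) N s t ->
  is_spanning_tree VS ES (\bigcup_(i < k) glue_near N i).
Proof.
move=> nearN; have [sj0 tj0] := hubs_in j0k.
apply: (bigcup_spanning_tree meet_hubs Es_in j0k sj0 tj0).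
  by rewrite /glue_near (negPf j0r) eqxx.
move=> i ik ij0; rewrite /glue_near (negPf ij0); case: eqP => [->//|_].
case: asboolP => [iso|_]; last exact: Nt_near.
by have [PV PE Ps Pt] := P_iso ik iso; apply: near_tree_act nearN.
Qed.

Lemma norbits_NT_le :
  norbits (autor (Vs r) (Es r) s t) (NT (Vs r) (Es r) s t) <= norbits (autor VS ES s t) (ST VS ES).
Proof.
apply: (@norbits_le _ Ar A _ _ (fun N => \bigcup_(i < k) glue_near N i)).
  by move=> N /mem_NT nearN; apply/mem_ST/glue_near_tree.
move=> N1 N2 /mem_NT nearN1 /mem_NT nearN2 /orbitP[g gA gN].
have [N1E _ _ nst1] := nearN1; have [N2E _ _ _] := nearN2.
have [_ gs gt _] := autorP _ _ _ _ _ gA.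
have [j jk [gEr gVr]] := autor_piece pieces_sp pieces_np meetV meetE gA rk.
have := edge_action_piece rk jk gEr (glue_near_sub N1E) (glue_near_sub N2E) gN.
rewrite /glue_near eqxx; case: eqP => [jr gN1|_].
  by rewrite jr in gEr gVr; apply/orbitP; exists g => //; apply: autor_restrict.
case: eqP => [_ gN1|_].
  case: nst1; rewrite -(connect_act_fixed N1 gs gt) gN1.
  by have [_ conT0 _] := T0_tree; have [sj0 tj0] := hubs_in j0k; apply: conT0.
case: asboolP => [iso gN1|niso]; last first.
  by case: niso; exists g; split=> //; apply: in2W; apply: perm_inj.
have [PV PE Ps Pt] := P_iso jk iso.
apply/orbitP; exists (g * (P j)^-1)%g; last by rewrite actM gN1 actK.
apply/autorP; split; rewrite ?actM ?gVr ?gEr -?PV -?PE ?actK //.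
  by rewrite permM gs -{1}Ps permK.
by rewrite permM gt -{1}Pt permK.
Qed.

End NearTrees.
End Injections.

Section Counting.
Variable V : finType.
Variables (k : nat) (Vs : nat -> {set V}) (Es : nat -> {set {set V}}) (s t : V).
Hypothesis pieces_sp : forall i, i < k -> sp (Vs i) (Es i) s t.
Hypothesis meetV : forall i j, i < k -> j < k -> i != j -> Vs i :&: Vs j = [set s; t].
Hypothesis meetE : forall i j, i < k -> j < k -> i != j -> Es i :&: Es j = set0.

Let inner i := Vs i :\: [set s; t].

Lemma card_piece i : i < k -> #|Vs i| = #|inner i| + 2.
Proof.
move/(piece_props pieces_sp) => P; rewrite -(cardsID [set s; t] (Vs i)) addnC.
have /setIidPr -> : [set s; t] \subset Vs i.
  by apply/subsetP => x; rewrite !inE => /orP[]/eqP->; [apply: sp_s P|apply: sp_t P].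
by rewrite cards2 (sp_neq P).
Qed.

Lemma sum_card_inner m : m <= k -> \sum_(i < m) #|inner i| = #|\bigcup_(i < m) inner i|.
Proof.
elim: m => [|m IH] mk; first by rewrite !big_ord0 cards0.
rewrite big_ord_recr (big_ord_recr m inner) /= IH ?(ltnW mk) // cardsU.
suff ->: (\bigcup_(i < m) inner i) :&: inner m = set0 by rewrite cards0 subn0.
apply/setP => x; rewrite !inE; apply/negP => /andP[/bigcupP[i _]].
rewrite !inE => /andP[xst xi] /andP[_ xm].
have im : (i : nat) != m by rewrite neq_ltn ltn_ord.
by have /setP/(_ x) := meetV (ltn_trans (ltn_ord i) mk) mk im; rewrite !inE xi xm (negPf xst).
Qed.

Lemma trivial_piece_edge i : i < k -> inner i = set0 -> [set s; t] \in Es i.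
Proof.
move=> ik inner0; have P := piece_props pieces_sp ik.
have [e ei] := piece_edge pieces_sp ik; have [x [y [nxy exy]]] := sp_edge2 P ei.
have hub z : z \in e -> z \in [set s; t].
  move=> ze; apply: contraT => zst; have: z \in inner i.
    by rewrite inE zst (subsetP (sp_edge_sub P ei)).
  by rewrite inner0 inE.
have [xst yst] : x \in [set s; t] /\ y \in [set s; t] by rewrite !hub // exy !inE eqxx ?orbT.
move: xst yst nxy ei; rewrite exy !inE => /orP[]/eqP-> /orP[]/eqP->; rewrite ?eqxx //.
by rewrite setUC.
Qed.

Lemma card_trivial_pieces : #|[set i : 'I_k | inner i == set0]| <= 1.
Proof.
apply/card_le1_eqP => i j; rewrite !inE => /eqP i0 /eqP j0; apply/val_inj/eqP.
apply: contraT => ji; have /setP/(_ [set s; t]) := meetE (ltn_ord j) (ltn_ord i) ji.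
by rewrite !inE !trivial_piece_edge.
Qed.

Lemma sum_card_pieces_le : \sum_(i < k) #|Vs i| <= 3 * #|\bigcup_(i < k) Vs i| + 2.
Proof.
set S := \sum_(i < k) #|inner i|.
have S_le : S <= #|\bigcup_(i < k) Vs i|.
  rewrite /S sum_card_inner //; apply/subset_leq_card/bigcupsP => i _.
  exact: subset_trans (subsetDl _ _) (bigcup_sup i _).
have -> : \sum_(i < k) #|Vs i| = S + k * 2.
  rewrite (eq_bigr (fun i : 'I_k => #|inner i| + 2)) => [|i _]; last exact: card_piece.
  by rewrite big_split /= sum_nat_const card_ord.
have k_le : k <= 1 + S.
  set Z := [set i : 'I_k | inner i == set0].
  rewrite -[k]card_ord -(cardsC Z) leq_add ?card_trivial_pieces // -sum1_card.
  rewrite [S](bigID (mem (~: Z))) /=; apply: leq_trans (leq_addr _ _).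
  by apply: leq_sum => i; rewrite !inE card_gt0.
lia.
Qed.

End Counting.

Section PieceBound.
Variable V : finType.
Variables (k : nat) (Vs : nat -> {set V}) (Es : nat -> {set {set V}}) (s t : V).
Hypothesis k2 : 1 < k.
Hypothesis pieces_sp : forall i, i < k -> sp (Vs i) (Es i) s t.
Hypothesis pieces_np : forall i, i < k -> ~ is_parallel (Vs i) (Es i) s t.
Hypothesis meetV : forall i j, i < k -> j < k -> i != j -> Vs i :&: Vs j = [set s; t].
Hypothesis meetE : forall i j, i < k -> j < k -> i != j -> Es i :&: Es j = set0.

Lemma exists_piece_spanning_tree i : i < k -> exists T, is_spanning_tree (Vs i) (Es i) T.
Proof. by move/(piece_props pieces_sp)/sp_connected/exists_spanning_tree. Qed.

Lemma norbits_piece_le r : r < k ->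
  norbits (autor (Vs r) (Es r) s t) (ST (Vs r) (Es r))
    + norbits (autor (Vs r) (Es r) s t) (NT (Vs r) (Es r) s t)
  <= 2 * norbits (autor (\bigcup_(i < k) Vs i) (\bigcup_(i < k) Es i) s t)
                 (ST (\bigcup_(i < k) Vs i) (\bigcup_(i < k) Es i)).
Proof.
move=> rk; have Pr := piece_props pieces_sp rk.
have near_ex i : exists N, i < k -> is_near_tree (Vs i) (Es i) N s t.
  have [ik|_] := ltnP i k; last by exists set0.
  have P := piece_props pieces_sp ik; have [T stT] := exists_piece_spanning_tree ik.
  by have [N nearN] := exists_near_tree stT (sp_s P) (sp_t P) (sp_neq P); exists N.
have [Nt Nt_near] := boolp.choice near_ex.
pose j0 := if r == 0 then 1 else 0.
have j0k : j0 < k by rewrite /j0; case: eqP; lia.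
have j0r : j0 != r by rewrite /j0; have [->|rn0] := eqVneq r 0; rewrite // eq_sym.
have [T0 T0_tree] := exists_piece_spanning_tree j0k.
have iso_ex j : exists p : {perm V}, j < k -> or_iso (Vs r) (Es r) (Vs j) (Es j) s t ->
    [/\ 'P^* (Vs r) p = Vs j, edge_action (Es r) p = Es j, p s = s & p t = t]%act.
  have [iso|niso] := pselect (or_iso (Vs r) (Es r) (Vs j) (Es j) s t); last by exists 1%g.
  by have [p Pp] := or_iso_perm iso (sp_edge_sub Pr) (sp_s Pr) (sp_t Pr); exists p.
have [P P_iso] := boolp.choice iso_ex.
rewrite mul2n -addnn leq_add //.
  exact: (norbits_ST_le pieces_sp pieces_np meetV meetE Nt_near rk).
exact: (norbits_NT_le pieces_sp pieces_np meetV meetE Nt_near rk j0k j0r T0_tree P_iso).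
Qed.

End PieceBound.

Import GRing.Theory Num.Theory.
Local Open Scope ring_scope.

Theorem lemma5p15 :
  exists C : rat, 0 < C /\
  forall (V : finType) (s t : V) (k : nat)
         (Vs : nat -> {set V}) (Es : nat -> {set {set V}}) (Rep : {set 'I_k}),
    parallel_decomp (\bigcup_(i < k) Vs i) (\bigcup_(i < k) Es i) s t k Vs Es ->
    (forall i : nat, (i < k)%N -> ~ is_parallel (Vs i) (Es i) s t) ->
    (* Rep picks exactly one representative in each oriented-isomorphism class *)
    (forall j : 'I_k, exists2 r, r \in Rep & or_iso (Vs j) (Es j) (Vs r) (Es r) s t) ->
    (forall r1 r2, r1 \in Rep -> r2 \in Rep -> r1 != r2 ->
       ~ or_iso (Vs r1) (Es r1) (Vs r2) (Es r2) s t) ->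
    ((\sum_(r in Rep)
        #|Vs r| * (norbits (autor (Vs r) (Es r) s t) (ST (Vs r) (Es r))
                 + norbits (autor (Vs r) (Es r) s t) (NT (Vs r) (Es r) s t)))%N%:R
     <= C * (#|\bigcup_(i < k) Vs i|)%:R
          * (norbits (autor (\bigcup_(i < k) Vs i) (\bigcup_(i < k) Es i) s t)
                     (ST (\bigcup_(i < k) Vs i) (\bigcup_(i < k) Es i)))%:R).
Proof.
exists 10%:R; split=> [|V s t k Vs Es Rep [[k2 pieces_sp] meetV meetE _ _] pieces_np _ _].
  by rewrite ltr0n.
rewrite -!natrM ler_nat; set M := norbits _ _; set n := #|_|.
have n_gt0 : (0 < n)%N.
  rewrite card_gt0; apply/set0Pn; exists s; apply/bigcupP; exists (Ordinal (ltnW k2)) => //.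
  exact: sp_s (piece_props pieces_sp (ltnW k2)).
have sum_le : (\sum_(r in Rep) #|Vs r| <= 3 * n + 2)%N.
  apply: leq_trans (sum_card_pieces_le pieces_sp meetV meetE).
  by rewrite [X in (_ <= X)%N](bigID (mem Rep)) leq_addr.
apply: (@leq_trans (\sum_(r in Rep) #|Vs r| * (2 * M))%N).
  apply: leq_sum => r _; rewrite leq_mul2l.
  by rewrite (norbits_piece_le k2 pieces_sp pieces_np meetV meetE (ltn_ord r)) orbT.
rewrite -big_distrl /=; apply: leq_trans (leq_mul sum_le (leqnn _)) _; nia.
Qed.
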